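(* (dS shift.) Consider the single-fluid shifted system with $\sigma>0$, and let $t_{\mathrm b},\xi_{\mathrm b},\xi_0,t_0$ be as in the time-interval setup, with $\sigma<h(t_{\mathrm b})^2$, and $b:=\max_{t\in[t_{\mathrm b},t_0]}\sqrt2\,|y_{\mathrm i}(t)|h(t)/l>0$. Then $$\Delta t_{\mathrm b0}\ \ge\ \frac{1}{2\sqrt{2\xi_0}}\,\frac{1}{b\,c\,l}\,\frac{\xi_0-\xi_{\mathrm b}}{\sqrt{1-\sigma/h(t_{\mathrm b})^2}}.$$
   Context: Shifted single-fluid system. Fix real constants $c>0$, $l>0$, $w\in[-1,1]$ and $\sigma\in\mathbb{R}$. Let $I\subseteq\mathbb R$ be an interval and $x,y_{\mathrm r},y_{\mathrm i},z,h$ real $C^1$ functions on $I$ with $h>0$, $z\ge0$. Define $\xi=x^2+\frac{1+w}{2}z^2$. Assume on $I$: $\dot x=[-x+4c\,y_{\mathrm r}y_{\mathrm i}+x\xi]h$, $\dot y_{\mathrm r}=[\xi y_{\mathrm r}-c\,x\,y_{\mathrm i}]h$, $\dot y_{\mathrm i}=[\xi y_{\mathrm i}+c\,x\,y_{\mathrm r}]h$, $\dot z=[-\frac{1+w}{2}+\xi]zh$, $\dot h=-\xi h^2$, with constraints $x^2+4y_{\mathrm r}^2+z^2=1-\sigma/h^2$ and $y_{\mathrm r}^2+y_{\mathrm i}^2=\frac{l^2}{2h^2}$. (Here $\sigma=L^2$ encodes a cosmological constant $\Lambda$ added to the cosine potential, of the sign of $\Lambda$.) Time-interval setup: let $t_{\mathrm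 b}\in I$, $\xi_{\mathrm b}:=\xi(t_{\mathrm b})$, and let $\xi_0$ be a real number with $\xi_0>0$ and $\xi_{\mathrm b}\le\xi_0\le\frac{1+w}{2}$. Assume the set $\{t\in I:\ t\ge t_{\mathrm b},\ \xi(t)=\xi_0\}$ is nonempty and let $t_0$ be its minimum (so $\xi(t)\le\xi_0$ for all $t\in[t_{\mathrm b},t_0]$); put $\Delta t_{\mathrm b0}=t_0-t_{\mathrm b}$. *)

From Stdlib Require Import Reals Lra.
Open Scope R_scope.

Definition is_interval (I : R -> Prop) : Prop :=
  forall a b t, I a -> I b -> a <= t <= b -> I t.

Definition has_deriv_within (I : R -> Prop) (f : R -> R) (t d : R) : Prop :=
  forall eps, 0 < eps -> exists delta, 0 < delta /\
    forall s, I s -> Rabs (s - t) < delta ->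
      Rabs (f s - f t - d * (s - t)) <= eps * Rabs (s - t).

From Stdlib Require Import Reals Lra.
From Coquelicot Require Import Coquelicot.
Open Scope R_scope.

(* Along the flow, [xi = x^2 + A z^2] (with [A = (1+w)/2]) satisfies
   [xi' = 2h (4c x yr yi + xi^2 - x^2 - A^2 z^2)], and the last three terms
   are [<= (A - 1) x^2 <= 0] as long as [xi <= A]; so only the coupling term
   [8c h x yr yi] can increase [xi].  Before the first time [t0] at which
   [xi = xi0] we have [xi <= xi0], hence [|x| <= sqrt xi0]; [h] decreases,
   so the constraint [x^2 + 4 yr^2 + z^2 = 1 - sigma / h^2] gives
   [|2 yr| <= sqrt (1 - sigma / h(tb)^2)]; and [sqrt 2 |yi| h <= b l] by the
   choice of [b].  The mean value theorem on [[tb, t0]] turns this bound on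
   the growth rate into the lower bound on [t0 - tb]. *)

(* [has_deriv_within] only speaks about points of [I]; composing with [clamp]
   extends a function constantly outside [[a, b]] so that Coquelicot's mean value
   and intermediate value theorems on the whole line apply. *)
Definition clamp (a b t : R) : R := Rmax a (Rmin b t).

Lemma clamp_in a b t : a <= b -> a <= clamp a b t <= b.
Proof. intros; unfold clamp, Rmax, Rmin; repeat destruct Rle_dec; lra. Qed.

Lemma clamp_id a b t : a <= t <= b -> clamp a b t = t.
Proof. intros; unfold clamp, Rmax, Rmin; repeat destruct Rle_dec; lra. Qed.

Lemma clamp_lipschitz a b s t : a <= b -> Rabs (clamp a b s - clamp a b t) <= Rabs (s - t).
Proof.
  intros; unfold clamp, Rmax, Rmin; repeat destruct Rle_dec;
  unfold Rabs; repeat destruct Rcase_abs; lra.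
Qed.

Lemma has_deriv_within_continuous I f t d : has_deriv_within I f t d ->
  forall eps, 0 < eps -> exists delta, 0 < delta /\
    forall s, I s -> Rabs (s - t) < delta -> Rabs (f s - f t) < eps.
Proof.
  intros Hd eps Heps.
  destruct (Hd 1 Rlt_0_1) as [delta [Hdelta Hs]].
  assert (Hk : 0 < Rabs d + 1) by (pose proof (Rabs_pos d); lra).
  exists (Rmin delta (eps / (Rabs d + 1))); split.
  { apply Rmin_pos; [lra | apply Rdiv_lt_0_compat; lra]. }
  intros s Is Hst.
  assert (Hst1 : Rabs (s - t) < delta) by (eapply Rlt_le_trans; [exact Hst | apply Rmin_l]).
  assert (Hst2 : Rabs (s - t) * (Rabs d + 1) < eps).
  { apply (Rmult_lt_compat_r (Rabs d + 1)) in Hst; [|lra].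
    eapply Rlt_le_trans; [exact Hst|].
    apply Rle_trans with (eps / (Rabs d + 1) * (Rabs d + 1)).
    - apply Rmult_le_compat_r; [lra | apply Rmin_r].
    - right; field; lra. }
  specialize (Hs s Is Hst1).
  replace (f s - f t) with ((f s - f t - d * (s - t)) + d * (s - t)) by ring.
  eapply Rle_lt_trans; [apply Rabs_triang|]. rewrite Rabs_mult. nra.
Qed.

Lemma continuity_pt_clamp_comp I f a b : a <= b ->
  (forall t, a <= t <= b -> I t) ->
  (forall t, a <= t <= b -> exists d, has_deriv_within I f t d) ->
  forall t, continuity_pt (fun s => f (clamp a b s)) t.
Proof.
  intros Hab Hsub Hd t eps Heps.
  assert (Ht := clamp_in a b t Hab).
  destruct (Hd _ Ht) as [d Hdt].
  destruct (has_deriv_within_continuous _ _ _ _ Hdt eps Heps) as [delta [Hdelta Hs]].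
  exists delta; split; [exact Hdelta|].
  intros s [_ Hst]; simpl in *; unfold R_dist in *.
  apply Hs; [apply Hsub, clamp_in, Hab|].
  eapply Rle_lt_trans; [apply clamp_lipschitz, Hab | exact Hst].
Qed.

Lemma is_derive_clamp_comp I f a b t d :
  (forall s, a <= s <= b -> I s) -> a < t < b ->
  has_deriv_within I f t d -> is_derive (fun s => f (clamp a b s)) t d.
Proof.
  intros Hsub Ht Hd. apply is_derive_Reals. intros eps Heps.
  destruct (Hd (eps / 2) ltac:(lra)) as [delta [Hdelta Hs]].
  assert (Hpos : 0 < Rmin delta (Rmin (t - a) (b - t))).
  { apply Rmin_pos; [lra | apply Rmin_pos; lra]. }
  exists (mkposreal _ Hpos). intros k Hk0 Hk; simpl in Hk.
  assert (Hkb : Rabs k < delta /\ Rabs k < t - a /\ Rabs k < b - t).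
  { unfold Rmin in Hk; repeat destruct Rle_dec; lra. }
  destruct (Rabs_def2 k (t - a)) as [Ha1 Ha2]; [lra|].
  destruct (Rabs_def2 k (b - t)) as [Hb1 Hb2]; [lra|].
  rewrite !clamp_id by lra.
  specialize (Hs (t + k) (Hsub (t + k) ltac:(lra))).
  replace (t + k - t) with k in Hs by ring.
  specialize (Hs ltac:(lra)).
  assert (Hk' : 0 < Rabs k) by (apply Rabs_pos_lt; exact Hk0).
  replace ((f (t + k) - f t) / k - d) with ((f (t + k) - f t - d * k) / k) by (field; exact Hk0).
  unfold Rdiv; rewrite Rabs_mult, Rabs_inv.
  apply Rle_lt_trans with (eps / 2); [|lra].
  apply Rmult_le_reg_r with (Rabs k); [exact Hk'|].
  rewrite Rmult_assoc, Rinv_l by lra. lra.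
Qed.

Lemma mean_value_within I f f' a b : a <= b ->
  (forall t, a <= t <= b -> I t) ->
  (forall t, a <= t <= b -> has_deriv_within I f t (f' t)) ->
  exists c, a <= c <= b /\ f b - f a = f' c * (b - a).
Proof.
  intros Hab Hsub Hd.
  destruct (MVT_gen (fun s => f (clamp a b s)) a b f') as [c [Hc Hmv]].
  - rewrite Rmin_left, Rmax_right by lra. intros t Ht.
    apply (is_derive_clamp_comp I); [exact Hsub | exact Ht | apply Hd; lra].
  - intros t _. apply (continuity_pt_clamp_comp I); [exact Hab | exact Hsub|].
    intros s Hs; exists (f' s); exact (Hd s Hs).
  - rewrite Rmin_left, Rmax_right in Hc by lra.
    rewrite !clamp_id in Hmv by lra. exists c; split; [exact Hc | exact Hmv].
Qed.

Lemma abs_le_sqrt u U : u ^ 2 <= U -> Rabs u <= sqrt U.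
Proof. intros; rewrite <- sqrt_Rsqr_abs; apply sqrt_le_1_alt; unfold Rsqr; lra. Qed.

Lemma sqr_add_scaled_sqr_nonneg A x z : 0 <= A -> 0 <= x ^ 2 + A * z ^ 2.
Proof.
  intros; apply Rplus_le_le_0_compat;
    [apply pow2_ge_0 | apply Rmult_le_pos; [lra | apply pow2_ge_0]].
Qed.

Lemma xi_rate_le_coupling c A x yr yi z h :
  0 <= A <= 1 -> 0 < h -> x ^ 2 + A * z ^ 2 <= A ->
  2 * x * ((- x + 4 * c * yr * yi + x * (x ^ 2 + A * z ^ 2)) * h)
  + A * (2 * z * ((- A + (x ^ 2 + A * z ^ 2)) * z * h))
  <= 8 * c * (x * yr * yi * h).
Proof.
  intros HA Hh Hxi.
  set (xi := x ^ 2 + A * z ^ 2) in *.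
  assert (Hxi_pos : 0 <= xi) by (apply sqr_add_scaled_sqr_nonneg; lra).
  assert (Hxi2 : xi * xi <= A * xi) by (apply Rmult_le_compat_r; lra).
  assert (HAxi : A * xi = A * x ^ 2 + A ^ 2 * z ^ 2) by (unfold xi; ring).
  assert (0 <= (1 - A) * x ^ 2) by (apply Rmult_le_pos; [lra | apply pow2_ge_0]).
  assert (Hgap : xi * xi - x ^ 2 - A ^ 2 * z ^ 2 <= 0) by lra.
  replace (2 * x * ((- x + 4 * c * yr * yi + x * xi) * h)
           + A * (2 * z * ((- A + xi) * z * h)))
    with (8 * c * (x * yr * yi * h) + 2 * h * (xi * xi - x ^ 2 - A ^ 2 * z ^ 2))
    by (unfold xi; ring).
  nra.
Qed.

Lemma coupling_term_le c x yr yi h X Y B : 0 < c -> 0 < h ->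
  Rabs x <= X -> Rabs (2 * yr) <= Y -> sqrt 2 * Rabs yi * h <= B ->
  8 * c * (x * yr * yi * h) <= 2 * (sqrt 2 * X) * B * c * Y.
Proof.
  intros Hc Hh Hx Hyr Hyi.
  assert (Hq : sqrt 2 * sqrt 2 = 2) by (apply sqrt_sqrt; lra).
  assert (Hqpos : 0 < sqrt 2) by (apply sqrt_lt_R0; lra).
  rewrite Rabs_mult, (Rabs_right 2) in Hyr by lra.
  assert (Habs : x * yr * yi * h <= Rabs x * Rabs yr * (Rabs yi * h)).
  { eapply Rle_trans; [apply Rle_abs|].
    rewrite !Rabs_mult, (Rabs_right h) by lra; right; ring. }
  assert (Hprod : Rabs x * Rabs yr <= X * (Y / 2)).
  { apply Rmult_le_compat; try apply Rabs_pos; lra. }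
  assert (0 <= Rabs x * Rabs yr) by (apply Rmult_le_pos; apply Rabs_pos).
  assert (0 <= Rabs yi * h) by (apply Rmult_le_pos; [apply Rabs_pos | lra]).
  apply (Rmult_le_reg_l (sqrt 2)); [exact Hqpos|].
  replace (sqrt 2 * (2 * (sqrt 2 * X) * B * c * Y)) with (4 * c * X * Y * B)
    by (transitivity (2 * (sqrt 2 * sqrt 2) * X * B * c * Y); [rewrite Hq|]; ring).
  apply Rle_trans with (8 * c * (Rabs x * Rabs yr) * (sqrt 2 * (Rabs yi * h))).
  { replace (8 * c * (Rabs x * Rabs yr) * (sqrt 2 * (Rabs yi * h)))
      with (sqrt 2 * (8 * c * (Rabs x * Rabs yr * (Rabs yi * h)))) by ring.
    apply Rmult_le_compat_l; nra. }
  apply Rle_trans with (8 * c * (X * (Y / 2)) * B); [|right; field].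
  apply Rmult_le_compat.
  - apply Rmult_le_pos; lra.
  - apply Rmult_le_pos; lra.
  - apply Rmult_le_compat_l; lra.
  - lra.
Qed.

Lemma elapsed_time_lower_bound gain rate K dt :
  0 < K -> 0 <= dt -> gain = rate * dt -> rate <= K -> gain / K <= dt.
Proof.
  intros HK Hdt -> Hrate. apply Rle_div_l; [lra|].
  rewrite Rmult_comm; apply Rmult_le_compat_l; assumption.
Qed.

Section ShiftedSystem.

Variables (c A sigma : R) (I : R -> Prop) (x yr yi z h : R -> R) (tb t0 : R).

Let xi t := x t ^ 2 + A * z t ^ 2.
Let xi' t := 2 * x t * ((- x t + 4 * c * yr t * yi t + x t * xi t) * h t)
  + A * (2 * z t * ((- A + xi t) * z t * h t)).

Hypothesis HA : 0 <= A <= 1.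
Hypothesis Hh : forall t, I t -> 0 < h t.
Hypothesis Hx' : forall t, I t -> has_deriv_within I x t
  ((- x t + 4 * c * yr t * yi t + x t * (x t ^ 2 + A * z t ^ 2)) * h t).
Hypothesis Hz' : forall t, I t -> has_deriv_within I z t
  ((- A + (x t ^ 2 + A * z t ^ 2)) * z t * h t).
Hypothesis Hh' : forall t, I t -> has_deriv_within I h t
  (- (x t ^ 2 + A * z t ^ 2) * h t ^ 2).
Hypothesis Hcon1 : forall t, I t ->
  x t ^ 2 + 4 * yr t ^ 2 + z t ^ 2 = 1 - sigma / h t ^ 2.
Hypothesis Hsigma : 0 < sigma.
Hypothesis Htb_t0 : tb <= t0.
Hypothesis Hsub : forall t, tb <= t <= t0 -> I t.

Lemma xi_clamp_continuous : continuity (fun t => xi (clamp tb t0 t)).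
Proof.
  assert (Hcx := continuity_pt_clamp_comp I x tb t0 Htb_t0 Hsub
    (fun t Ht => ex_intro _ _ (Hx' t (Hsub t Ht)))).
  assert (Hcz := continuity_pt_clamp_comp I z tb t0 Htb_t0 Hsub
    (fun t Ht => ex_intro _ _ (Hz' t (Hsub t Ht)))).
  intros t; unfold xi; simpl.
  apply continuity_pt_plus.
  - apply continuity_pt_mult; [apply Hcx|]. apply continuity_pt_mult; [apply Hcx|].
    apply continuity_pt_const; intros ? ?; reflexivity.
  - apply continuity_pt_mult; [apply continuity_pt_const; intros ? ?; reflexivity|].
    apply continuity_pt_mult; [apply Hcz|]. apply continuity_pt_mult; [apply Hcz|].
    apply continuity_pt_const; intros ? ?; reflexivity.
Qed.

Lemma xi_clamp_derive t : tb < t < t0 ->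
  is_derive (fun s => xi (clamp tb t0 s)) t (xi' t).
Proof.
  intros Ht.
  assert (It : I t) by (apply Hsub; lra).
  assert (Hdx := is_derive_clamp_comp I x tb t0 t _ Hsub Ht (Hx' t It)).
  assert (Hdz := is_derive_clamp_comp I z tb t0 t _ Hsub Ht (Hz' t It)).
  assert (Hd := is_derive_plus _ _ _ _ _ (is_derive_pow _ 2 _ _ Hdx)
    (is_derive_scal _ _ A _ (is_derive_pow _ 2 _ _ Hdz))).
  refine (eq_ind _ (is_derive (fun s => xi (clamp tb t0 s)) t) Hd _ _).
  unfold xi', xi, plus; simpl; rewrite clamp_id by lra; ring.
Qed.

Lemma h_nonincreasing t : tb <= t <= t0 -> h t <= h tb.
Proof.
  intros Ht.
  destruct (mean_value_within I h (fun s => - xi s * h s ^ 2) tb t ltac:(lra)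
    (fun s Hs => Hsub s ltac:(lra)) (fun s Hs => Hh' s (Hsub s ltac:(lra))))
    as [s [Hs Hmv]].
  assert (0 <= xi s * h s ^ 2 * (t - tb)).
  { apply Rmult_le_pos; [apply Rmult_le_pos; [apply sqr_add_scaled_sqr_nonneg; lra | apply pow2_ge_0] | lra]. }
  lra.
Qed.

Lemma xi_le_before_first_hit xi0 : xi tb <= xi0 ->
  (forall t, I t -> tb <= t -> xi t = xi0 -> t0 <= t) ->
  forall t, tb <= t <= t0 -> xi t <= xi0.
Proof.
  intros Hxib Hfirst t Ht.
  destruct (Rle_dec (xi t) xi0) as [|Hgt]; [assumption | exfalso].
  destruct (IVT_gen _ tb t xi0 xi_clamp_continuous) as [s [Hs Hxis]].
  - rewrite !clamp_id, Rmin_left, Rmax_right by lra; lra.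
  - rewrite Rmin_left, Rmax_right in Hs by lra.
    rewrite clamp_id in Hxis by lra.
    assert (t0 <= s) by exact (Hfirst s (Hsub s ltac:(lra)) ltac:(lra) Hxis).
    assert (s = t) by lra; subst s; lra.
Qed.

Lemma xi_mean_value : exists s, tb <= s <= t0 /\ xi t0 - xi tb = xi' s * (t0 - tb).
Proof.
  destruct (MVT_gen (fun s => xi (clamp tb t0 s)) tb t0 xi') as [s [Hs Hmv]].
  - rewrite Rmin_left, Rmax_right by lra; apply xi_clamp_derive.
  - intros; apply xi_clamp_continuous.
  - rewrite Rmin_left, Rmax_right in Hs by lra.
    rewrite !clamp_id in Hmv by lra.
    exists s; split; assumption.
Qed.

Lemma two_yr_bound t : tb <= t <= t0 -> Rabs (2 * yr t) <= sqrt (1 - sigma / h tb ^ 2).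
Proof.
  intros Ht. apply abs_le_sqrt.
  assert (It := Hsub t Ht).
  assert (sigma / h tb ^ 2 <= sigma / h t ^ 2).
  { pose proof (h_nonincreasing t Ht); pose proof (Hh t It).
    apply Rmult_le_compat_l; [lra|]. apply Rinv_le_contravar; nra. }
  pose proof (Hcon1 t It); pose proof (pow2_ge_0 (x t)); pose proof (pow2_ge_0 (z t)).
  lra.
Qed.

Lemma xi_rate_le xi0 B t : 0 < c -> tb <= t <= t0 -> xi t <= xi0 <= A ->
  sqrt 2 * Rabs (yi t) * h t <= B ->
  xi' t <= 2 * (sqrt 2 * sqrt xi0) * B * c * sqrt (1 - sigma / h tb ^ 2).
Proof.
  intros Hc Ht Hxi Hyi.
  assert (Hht := Hh t (Hsub t Ht)).
  assert (HxiA : x t ^ 2 + A * z t ^ 2 <= A) by (unfold xi in Hxi; lra).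
  apply (Rle_trans _ _ _ (xi_rate_le_coupling c A _ (yr t) (yi t) _ _ HA Hht HxiA)).
  apply coupling_term_le; [exact Hc | exact Hht | | apply two_yr_bound, Ht | exact Hyi].
  apply abs_le_sqrt.
  assert (0 <= A * z t ^ 2) by (apply Rmult_le_pos; [lra | apply pow2_ge_0]).
  unfold xi in *; lra.
Qed.

End ShiftedSystem.

Theorem mainTheorem5
  (c l w sigma : R) (I : R -> Prop)
  (x yr yi z h : R -> R)
  (tb t0 xi0 b : R)
  (Hc : 0 < c) (Hl : 0 < l) (Hw : -1 <= w <= 1)
  (HI : is_interval I)
  (Hh : forall t, I t -> 0 < h t)
  (Hz : forall t, I t -> 0 <= z t)
  (Hx' : forall t, I t -> has_deriv_within I x t
     ((- x t + 4 * c * yr t * yi t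
       + x t * (x t ^ 2 + (1 + w) / 2 * z t ^ 2)) * h t))
  (Hyr' : forall t, I t -> has_deriv_within I yr t
     (((x t ^ 2 + (1 + w) / 2 * z t ^ 2) * yr t - c * x t * yi t) * h t))
  (Hyi' : forall t, I t -> has_deriv_within I yi t
     (((x t ^ 2 + (1 + w) / 2 * z t ^ 2) * yi t + c * x t * yr t) * h t))
  (Hz' : forall t, I t -> has_deriv_within I z t
     ((- ((1 + w) / 2) + (x t ^ 2 + (1 + w) / 2 * z t ^ 2)) * z t * h t))
  (Hh' : forall t, I t -> has_deriv_within I h t
     (- (x t ^ 2 + (1 + w) / 2 * z t ^ 2) * h t ^ 2))
  (Hcon1 : forall t, I t ->
     x t ^ 2 + 4 * yr t ^ 2 + z t ^ 2 = 1 - sigma / h t ^ 2)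
  (Hcon2 : forall t, I t ->
     yr t ^ 2 + yi t ^ 2 = l ^ 2 / (2 * h t ^ 2))
  (Hsigma : 0 < sigma)
  (Htb : I tb)
  (Hxi0pos : 0 < xi0)
  (Hxi0 : x tb ^ 2 + (1 + w) / 2 * z tb ^ 2 <= xi0 <= (1 + w) / 2)
  (Ht0I : I t0) (Ht0tb : tb <= t0)
  (Ht0xi : x t0 ^ 2 + (1 + w) / 2 * z t0 ^ 2 = xi0)
  (Ht0min : forall t, I t -> tb <= t ->
     x t ^ 2 + (1 + w) / 2 * z t ^ 2 = xi0 -> t0 <= t)
  (Hsigh : sigma < h tb ^ 2)
  (Hbmax : forall t, tb <= t <= t0 -> sqrt 2 * Rabs (yi t) * h t / l <= b)
  (Hbatt : exists t, tb <= t <= t0 /\ b = sqrt 2 * Rabs (yi t) * h t / l)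
  (Hbpos : 0 < b) :
  t0 - tb >=
    1 / (2 * sqrt (2 * xi0)) * (1 / (b * c * l))
    * ((xi0 - (x tb ^ 2 + (1 + w) / 2 * z tb ^ 2))
       / sqrt (1 - sigma / h tb ^ 2)).
Proof.
  set (A := (1 + w) / 2) in *.
  assert (HA : 0 <= A <= 1) by (unfold A; lra).
  assert (Hsub : forall t, tb <= t <= t0 -> I t) by (intros t; apply HI; assumption).
  destruct (xi_mean_value c A I x yr yi z h tb t0 Hx' Hz' Ht0tb Hsub) as [s [Hs Hgain]].
  cbv beta in Hgain; rewrite Ht0xi in Hgain.
  assert (Hrate := xi_rate_le c A sigma I x yr yi z h tb t0 HA Hh Hh' Hcon1 Hsigma Hsub
    xi0 (b * l) s Hc Hs
    (conj (xi_le_before_first_hit c A I x yr yi z h tb t0 Hx' Hz' Ht0tb Hsub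
             xi0 (proj1 Hxi0) Ht0min s Hs) (proj2 Hxi0))
    (proj1 (Rle_div_l _ _ _ Hl) (Hbmax s Hs))).
  cbv beta in Hrate.
  assert (HS : 0 < 1 - sigma / h tb ^ 2).
  { pose proof (Hh tb Htb). apply (Rdiv_lt_1 sigma (h tb ^ 2)) in Hsigh; [lra | nra]. }
  assert (Hsqrt : forall u, 0 < u -> 0 < sqrt u) by exact sqrt_lt_R0.
  rewrite sqrt_mult by lra.
  apply Rle_ge.
  refine (Rle_trans _ _ _ _ (elapsed_time_lower_bound _ _ _ (t0 - tb) _ _ Hgain Hrate)).
  - right; field; repeat split; try apply Rgt_not_eq, Hsqrt; lra.
  - apply Rmult_lt_0_compat; [|apply Hsqrt, HS].
    repeat apply Rmult_lt_0_compat; try apply Hsqrt; lra.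
  - lra.
Qed.
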